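(* For every $n\ge 5$, $v(C_n)=v(P_{n-3})+1$, where $C_n$ is the cycle on $n$ vertices and $P_{n-3}$ is the path on $n-3$ vertices.
   Context: Let $K$ be a field and $S$ a standard graded polynomial ring over $K$. For a proper graded ideal $I\subset S$, the $v$-number is $v(I)=\min\{k\ge 0 : \exists f\in S_k,\ \mathcal P\in\operatorname{Ass}(S/I) \text{ with } (I:f)=\mathcal P\}$. For a finite simple graph $G$ whose vertices are the variables of $S$, $I(G)$ is the edge ideal generated by $x_ix_j$ over edges $\{x_i,x_j\}$, and $v(G):=v(I(G))$. The path $P_m$ has vertices $x_1,\dots,x_m$ and edges $\{x_i,x_{i+1}\}$; the cycle $C_n$ has vertices $x_1,\dots,x_n$ and edges $\{x_i,x_{i+1}\}$ ($1\le i\le n-1$) and $\{x_n,x_1\}$. *)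

From mathcomp Require Import all_boot all_algebra.
From mathcomp Require Import mpoly.
Set Implicit Arguments. Unset Strict Implicit. Unset Printing Implicit Defensive.
Import GRing.Theory.
Local Open Scope ring_scope.

(* Subsets of S = {mpoly K[n]} (variables x_1..x_n are 'X_0 .. 'X_(n-1)). *)
Definition mset (n : nat) (K : fieldType) := {mpoly K[n]} -> Prop.

Definition is_ideal n (K : fieldType) (I : mset n K) : Prop :=
  I 0 /\ (forall p q, I p -> I q -> I (p + q)) /\ (forall r p, I p -> I (r * p)).

Definition is_prime_ideal n (K : fieldType) (P : mset n K) : Prop :=
  is_ideal P /\ ~ P 1 /\ (forall a b, P (a * b) -> P a \/ P b).

Definition colon n (K : fieldType) (I : mset n K) (f : {mpoly K[n]}) : mset n K :=
  fun g => I (g * f).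

Definition same_set n (K : fieldType) (A B : mset n K) : Prop :=
  forall h, A h <-> B h.

(* P in Ass(S/I): P is a prime ideal of the form (I : g) for some g in S *)
Definition is_assoc_prime n (K : fieldType) (I : mset n K) (P : mset n K) : Prop :=
  is_prime_ideal P /\ exists g : {mpoly K[n]}, same_set (colon I g) P.

Definition vnum_cond n (K : fieldType) (I : mset n K) (k : nat) : Prop :=
  exists f : {mpoly K[n]}, f \is k.-homog /\
    exists P : mset n K, is_assoc_prime I P /\ same_set (colon I f) P.

Definition is_vnumber n (K : fieldType) (I : mset n K) (k : nat) : Prop :=
  vnum_cond I k /\ forall k', vnum_cond I k' -> (k <= k')%N.

(* edge ideal of a graph on vertex set 'I_n given by a symmetric irreflexive
   adjacency relation e: the ideal generated by x_i x_j for e i j *)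
Definition edge_ideal n (K : fieldType) (e : rel 'I_n) : mset n K :=
  fun p => exists c : 'I_n -> 'I_n -> {mpoly K[n]},
    p = \sum_(i < n) \sum_(j < n) (if e i j then c i j * ('X_i * 'X_j) else 0).

Definition path_rel (m : nat) : rel 'I_m :=
  fun i j => (i.+1 == j :> nat) || (j.+1 == i :> nat).

Definition cycle_rel (n : nat) : rel 'I_n :=
  fun i j => [|| (i.+1 == j :> nat), (j.+1 == i :> nat),
                 ((i == 0 :> nat) && (j == n.-1 :> nat))
               | ((j == 0 :> nat) && (i == n.-1 :> nat))].

(* By a theorem of Jaramillo and Villarreal, the v-number of an edge ideal is
   combinatorial: v(I(G)) is the least size of a stable set A whose
   neighbourhood N(A) is a vertex cover.  For such A the colon ideal
   (I(G) : x_A) is the prime ideal generated by the variables of N(A).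
   Conversely, if (I(G) : f) = P is prime, some monomial x^m of f lies
   outside I(G), so its support A is stable; for every edge ij, x_i x_j lies
   in P, hence x_i or x_j does, and then x_i x^m (or x_j x^m) is divisible by
   an edge, i.e. i or j lies in N(A).
   On a path or a cycle each vertex of A covers at most four edges, which
   gives 4|A| >= m - 1 for P_m and 4|A| >= n for C_n, and vertices spaced
   four apart attain these bounds.  So v(P_m) = (m+2) div 4 and
   v(C_n) = (n+3) div 4 = v(P_(n-3)) + 1. *)

From mathcomp Require Import all_boot all_algebra.
From mathcomp Require Import mpoly.
From mathcomp Require Import zify.
Set Implicit Arguments. Unset Strict Implicit. Unset Printing Implicit Defensive.
Import GRing.Theory.
Local Open Scope ring_scope.

Lemma disjointP (T : finType) (A B : {set T}) :
  reflect (forall x, x \in A -> x \notin B) [disjoint A & B].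
Proof. by rewrite disjoint_subset; apply: (iffP subsetP) => h x /h; rewrite ?inE. Qed.

Section StableSets.
Variables (N : nat) (e : rel 'I_N).
Implicit Types (A B C : {set 'I_N}).

Definition stable A := [forall a in A, forall b in A, ~~ e a b].

Definition nbhd A := [set i | [exists a in A, e i a]].

Definition vertex_cover C := forall i j, e i j -> (i \in C) || (j \in C).

Definition stable_nbhd_cover A := stable A /\ vertex_cover (nbhd A).

Lemma stableP A : reflect (forall a b, a \in A -> b \in A -> ~~ e a b) (stable A).
Proof.
apply: (iffP forall_inP) => h a; first by move=> b /h /forall_inP; apply.
by move=> aA; apply/forall_inP => b; apply: h.
Qed.

Lemma nbhdP A i : reflect (exists2 a, a \in A & e i a) (i \in nbhd A).
Proof. by rewrite inE; apply: exists_inP. Qed.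

Hypothesis e_sym : forall i j, e i j = e j i.

Lemma stableU A B :
  stable (A :|: B) = [&& stable A, stable B & [disjoint A & nbhd B]].
Proof.
apply/stableP/and3P => [h|[/stableP hA /stableP hB /disjointP hAB] a b].
  have hU a b : a \in A :|: B -> b \in A :|: B -> ~~ e a b := h a b.
  split.
  - by apply/stableP => a b aA bA; apply: hU; rewrite inE ?aA ?bA.
  - by apply/stableP => a b aB bB; apply: hU; rewrite inE ?aB ?bB orbT.
  apply/disjointP => a aA; apply/negP; case/nbhdP => b bB; apply/negP.
  by apply: hU; rewrite inE ?aA ?bB ?orbT.
rewrite !inE => /orP [aA|aB] /orP [bA|bB]; first exact: hA.
- by apply: contra (hAB _ aA) => eab; apply/nbhdP; exists b.
- by apply: contra (hAB _ bA) => eab; apply/nbhdP; exists a; rewrite // e_sym.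
- exact: hB.
Qed.

Lemma stableU1 (e_irr : irreflexive e) i A :
  stable (i |: A) = stable A && (i \notin nbhd A).
Proof.
have stable1 : stable [set i].
  by apply/stableP => a b; rewrite !inE => /eqP -> /eqP ->; rewrite e_irr.
by rewrite stableU stable1 disjoints1.
Qed.

Lemma stableU_nbhd_cover A B : stable A -> vertex_cover (nbhd A) ->
  stable (B :|: A) = [disjoint B & nbhd A].
Proof.
move=> hA hcov; rewrite stableU hA /=; apply/andb_idl => /disjointP hB.
by apply/stableP => a b aB bB; apply/negP => /hcov /orP []; apply/negP; exact: hB.
Qed.

End StableSets.

Section MonomialSupport.
Variable N : nat.
Implicit Types (m : 'X_{1..N}) (A : {set 'I_N}).

Definition mnm_supp m := [set i | (0 < m i)%N].

Definition mnm_of_set A := (\sum_(i in A) U_(i))%MM.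

Lemma mnm_suppD m1 m2 : mnm_supp (m1 + m2) = mnm_supp m1 :|: mnm_supp m2.
Proof. by apply/setP => i; rewrite !inE mnmDE addn_gt0. Qed.

Lemma mnm_supp1 i : mnm_supp U_(i) = [set i].
Proof. by apply/setP => j; rewrite !inE mnm1E eq_sym; case: (j == i). Qed.

Lemma card_mnm_supp m : (#|mnm_supp m| <= mdeg m)%N.
Proof.
rewrite -sum1_card big_mkcond mdegE; apply: leq_sum => i _.
by rewrite inE; case: (m i).
Qed.

Lemma mnm_supp_of_set A : mnm_supp (mnm_of_set A) = A.
Proof.
apply/setP => i; rewrite inE /mnm_of_set mnm_sumE.
under eq_bigr do rewrite mnm1E.
apply/idP/idP => [|iA]; last by rewrite (bigD1 i) //= eqxx.
apply: contraLR => iA; rewrite -leqNgt leqn0 big1 // => j jA.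
by rewrite (_ : (j == i) = false) //; apply: contraNF iA => /eqP <-.
Qed.

Lemma mdeg_mnm_of_set A : mdeg (mnm_of_set A) = #|A|.
Proof.
rewrite /mnm_of_set (big_morph mdeg mdegD mdeg0).
under eq_bigr do rewrite mdeg1.
exact: sum1_card.
Qed.

End MonomialSupport.

Section MonomialMultiple.
Variables (n : nat) (R : nzRingType).

Lemma mnm_le_mcoeffMX (p : {mpoly R[n]}) u m : (p * 'X_[u])@_m != 0 -> (u <= m)%MM.
Proof.
rewrite -mcoeff_msupp (perm_mem (msuppMX p u)) => /mapP [m' _ ->].
exact: lem_addr.
Qed.

Lemma mcoeffMX_eq0 (Q : 'X_{1..n} -> Prop) (p : {mpoly R[n]}) u :
  (forall m, Q m -> (p * 'X_[u])@_m = 0) <-> (forall m, Q (u + m)%MM -> p@_m = 0).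
Proof.
split => h m Qm; first by rewrite -(mcoeffMX p u) h.
apply/eqP; apply: contraT => nz; have ule := mnm_le_mcoeffMX nz.
move: nz; rewrite -(submK ule) addmC mcoeffMX h ?eqxx //.
by rewrite addmC submK.
Qed.

End MonomialMultiple.

Section EdgeIdeal.
Variables (N : nat) (K : fieldType) (e : rel 'I_N).
Local Notation I := (edge_ideal (K:=K) e).

Lemma edge_ideal0 : I 0.
Proof.
exists (fun _ _ => 0); symmetry; apply: big1 => i _; apply: big1 => j _.
by case: (e i j); rewrite ?mul0r.
Qed.

Lemma edge_idealD p q : I p -> I q -> I (p + q).
Proof.
move=> [c1 ->] [c2 ->]; exists (fun i j => c1 i j + c2 i j).
rewrite -big_split; apply: eq_bigr => i _; rewrite -big_split; apply: eq_bigr => j _.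
by case: (e i j); rewrite /= ?mulrDl ?addr0.
Qed.

Lemma edge_ideal_edge r i j : e i j -> I (r * ('X_i * 'X_j)).
Proof.
move=> eij; exists (fun a b => if (a == i) && (b == j) then r else 0).
rewrite (bigD1 i) //= (bigD1 j) //= !eqxx eij /=.
rewrite [X in _ + X]big1 => [|a /negbTE ai]; last first.
  by apply: big1 => b _; rewrite ai /=; case: (e a b); rewrite ?mul0r.
rewrite big1 => [|b /negbTE bj]; last by rewrite bj; case: (e i b); rewrite ?mul0r.
by rewrite !addr0.
Qed.

Hypothesis e_irr : irreflexive e.

Lemma edge_idealP p : I p <-> forall m, stable e (mnm_supp m) -> p@_m = 0.
Proof.
split=> [[c ->] m /stableP mA|h].
  rewrite raddf_sum; apply: big1 => i _; rewrite raddf_sum; apply: big1 => j _.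
  case eij: (e i j); last exact: raddf0.
  apply/eqP; apply: contraT; rewrite -mpolyXD => /mnm_le_mcoeffMX /mnm_lepP le_m.
  have pos k : k \in [:: i; j] -> k \in mnm_supp m.
    rewrite !inE => kij; apply: leq_trans (le_m k); rewrite mnmDE !mnm1E.
    by case/orP: kij => /eqP ->; rewrite eqxx ?addn1 ?add1n.
  have jij : j \in [:: i; j] by rewrite !inE eqxx orbT.
  by have := mA i j (pos i (mem_head _ _)) (pos j jij); rewrite eij.
rewrite [p]mpolyE; apply: (big_ind I edge_ideal0 edge_idealD) => m _.
case: (boolP (stable e (mnm_supp m))) => [/h -> | ].
  by rewrite scale0r; exact: edge_ideal0.
case/forall_inPn => i; rewrite inE => im /forall_inPn [j]; rewrite inE => jm /negPn eij.
have le_m : (U_(i) + U_(j) <= m)%MM.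
  apply/mnm_lepP => k; rewrite mnmDE !mnm1E.
  case: (eqVneq i k) => [eik|_]; case: (eqVneq j k) => [ejk|_] /=; subst; try lia.
  by rewrite e_irr in eij.
by rewrite -(submK le_m) !mpolyXD scalerAl; exact: edge_ideal_edge.
Qed.

End EdgeIdeal.

Section VariableIdeal.
Variables (N : nat) (K : fieldType) (C : {set 'I_N}).

Definition kill_vars : N.-tuple {mpoly K[N]} :=
  [tuple if i \in C then 0 else 'X_i | i < N].

(* The ideal generated by the variables x_c, c \in C, presented as the kernel
   of the substitution x_c := 0, which makes its primality immediate. *)
Definition var_ideal : mset N K := fun p => p \mPo kill_vars = 0.

Lemma comp_kill_varsX m :
  'X_[m] \mPo kill_vars = if [disjoint mnm_supp m & C] then 'X_[m] else 0.
Proof.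
rewrite comp_mpolyX; case: ifP => [/disjointP dis | ].
  rewrite [RHS]mpolyXE_id; apply: eq_bigr => i _; rewrite tnth_mktuple.
  case: ifP => // iC; have : i \notin mnm_supp m by apply: contraL iC; exact: dis.
  by rewrite inE -eqn0Ngt => /eqP ->; rewrite !expr0.
rewrite disjoint_subset => /negbT /subsetPn [c cm]; rewrite !inE negbK in cm * => cC.
by rewrite (bigD1 c) //= tnth_mktuple cC expr0n gtn_eqF // mul0r.
Qed.

Lemma mcoeff_comp_kill_vars p m :
  [disjoint mnm_supp m & C] -> (p \mPo kill_vars)@_m = p@_m.
Proof.
move=> dis; rewrite comp_mpolyEX [in RHS](mpolyE p) !raddf_sum /=.
apply: eq_bigr => m' _; rewrite !mcoeffZ comp_kill_varsX.
case: ifP => // dis'; rewrite mcoeff0 mcoeffX.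
by case: eqP => [eq_m|]; [rewrite -eq_m dis' in dis | rewrite mulr0].
Qed.

Lemma var_idealP p : var_ideal p <-> forall m, [disjoint mnm_supp m & C] -> p@_m = 0.
Proof.
split=> [p0 m dis|h]; first by rewrite -mcoeff_comp_kill_vars // p0 mcoeff0.
rewrite /var_ideal comp_mpolyEX big_seq; apply: big1 => m pm.
rewrite comp_kill_varsX; case: ifP => dis; last by rewrite scaler0.
by move: pm; rewrite mcoeff_msupp h ?eqxx.
Qed.

Lemma var_ideal_prime : is_prime_ideal var_ideal.
Proof.
rewrite /var_ideal; split; [split; [|split] | split].
- exact: raddf0.
- by move=> p q p0 q0; rewrite comp_mpolyD p0 q0 addr0.
- by move=> r p p0; rewrite rmorphM /= p0 mulr0.
- by rewrite rmorph1; apply/eqP; exact: oner_neq0.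
- by move=> a b /eqP; rewrite rmorphM /= mulf_eq0 => /orP [] /eqP; [left | right].
Qed.

End VariableIdeal.

Section VNumber.
Variables (N : nat) (K : fieldType) (e : rel 'I_N).
Hypotheses (e_irr : irreflexive e) (e_sym : forall i j, e i j = e j i).
Local Notation I := (edge_ideal (K:=K) e).

Lemma colon_edge_ideal m : stable_nbhd_cover e (mnm_supp m) ->
  same_set (colon I 'X_[m]) (var_ideal (K:=K) (nbhd e (mnm_supp m))).
Proof.
move=> [mA mcov] h; rewrite /colon.
have stab m' : stable e (mnm_supp (m + m')) = [disjoint mnm_supp m' & nbhd e (mnm_supp m)].
  by rewrite mnm_suppD setUC stableU_nbhd_cover.
split.
  move/(edge_idealP e_irr)/mcoeffMX_eq0 => hI; apply/var_idealP => m' dis.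
  by apply: hI; rewrite stab.
move/var_idealP => h0; apply/(edge_idealP e_irr); apply/mcoeffMX_eq0 => m'.
by rewrite stab; exact: h0.
Qed.

Lemma vnum_cond_stable_nbhd_cover A : stable_nbhd_cover e A -> vnum_cond I #|A|.
Proof.
move=> hA; have suppA := mnm_supp_of_set A.
have hcol := colon_edge_ideal (m := mnm_of_set A); rewrite suppA in hcol.
exists 'X_[mnm_of_set A]; split; first by rewrite dhomogX; apply/eqP; exact: mdeg_mnm_of_set.
exists (var_ideal (K:=K) (nbhd e A)); split; last exact: hcol.
by split; [exact: var_ideal_prime | exists 'X_[mnm_of_set A]; exact: hcol].
Qed.

Lemma stable_nbhd_cover_of_vnum_cond k :
  vnum_cond I k -> exists2 A, stable_nbhd_cover e A & (#|A| <= k)%N.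
Proof.
case=> f [f_hom [P [[[_ [P1 P_prime]] _] hcol]]].
have [m mf mA] : exists2 m, m \in msupp f & stable e (mnm_supp m).
  apply/hasP; apply: contraT => hn; case: P1; apply/hcol; rewrite /colon mul1r.
  apply/(edge_idealP e_irr) => m mA; apply/eqP; rewrite -[_ == 0]negbK -mcoeff_msupp.
  by apply: contra hn => mf; apply/hasP; exists m.
exists (mnm_supp m); last by move/dhomogP: f_hom => /(_ m mf) <-; exact: card_mnm_supp.
split=> // i j eij.
have nbhdX x : P 'X_x -> x \in nbhd e (mnm_supp m).
  move/hcol/(edge_idealP e_irr)/(_ (m + U_(x))%MM); rewrite mnm_suppD mnm_supp1 setUC.
  rewrite stableU1 // mA /= mulrC addmC mcoeffMX => f0.
  by apply: contraLR mf => /f0 fm0; rewrite mcoeff_msupp fm0 eqxx.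
have : P ('X_i * 'X_j) by apply/hcol; rewrite /colon mulrC; exact: edge_ideal_edge.
by case/P_prime => /nbhdX ->; rewrite ?orbT.
Qed.

Lemma is_vnumber_edge_ideal k :
  (exists2 A, stable_nbhd_cover e A & (#|A| <= k)%N) ->
  (forall A, stable_nbhd_cover e A -> (k <= #|A|)%N) ->
  is_vnumber I k.
Proof.
move=> [A hA leAk] hmin; have eqAk : #|A| = k by apply/eqP; rewrite eqn_leq leAk hmin.
split; first by rewrite -eqAk; exact: vnum_cond_stable_nbhd_cover.
by move=> k' /stable_nbhd_cover_of_vnum_cond [B hB leBk']; apply: leq_trans (hmin B hB) leBk'.
Qed.

End VNumber.

Local Open Scope nat_scope.

Lemma card_covered_by_windows N (A : {set 'I_N}) (f : 'I_N -> nat -> nat) s w :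
  (forall i, i < s -> exists2 a, a \in A & exists2 t, t < w & i = f a t) ->
  s <= #|A| * w.
Proof.
move=> hcov.
have sub : {subset iota 0 s <= [seq f a t | a <- enum A, t <- iota 0 w]}.
  move=> i; rewrite mem_iota add0n => /hcov [a aA [t tw ->]].
  by apply/allpairsP; exists (a, t); rewrite mem_enum mem_iota.
have := uniq_leq_size (iota_uniq 0 s) sub.
by rewrite size_iota size_allpairs size_iota -cardE.
Qed.

Lemma path_rel_irr m : irreflexive (@path_rel m).
Proof. by move=> i; apply/negbTE; rewrite /path_rel; lia. Qed.

Lemma path_rel_sym m (i j : 'I_m) : path_rel i j = path_rel j i.
Proof. by rewrite /path_rel orbC. Qed.

Lemma path_cover_card m (A : {set 'I_m}) :
  vertex_cover (@path_rel m) (nbhd (@path_rel m) A) -> (m + 2) %/ 4 <= #|A|.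
Proof.
move=> hcov; suff : m.-1 <= #|A| * 4 by lia.
(* The edge {i, i+1} is covered through a only if a - 2 <= i <= a + 1. *)
apply: (card_covered_by_windows (f := fun a t => a + t - 2)) => i lt_i.
have ltm : i < m by lia.
have ltm1 : i.+1 < m by lia.
have : path_rel (Ordinal ltm) (Ordinal ltm1) by rewrite /path_rel /= eqxx.
case/hcov/orP => /nbhdP [a aA adj]; exists a => //; exists (i + 2 - a);
  move: adj; rewrite /path_rel /=; lia.
Qed.

Lemma path_stable_nbhd_cover m : 0 < m ->
  exists2 A, stable_nbhd_cover (@path_rel m) A & #|A| <= (m + 2) %/ 4.
Proof.
case: m => // m _; set k := (m + 3) %/ 4.
pose pos (t : 'I_k) : 'I_m.+1 := inord (minn (4 * t + 2) m).
have posE t : pos t = minn (4 * t + 2) m :> nat by rewrite inordK //; lia.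
exists [set pos t | t : 'I_k]; last first.
  by apply: leq_trans (leq_imset_card _ _) _; rewrite card_ord; lia.
split.
  apply/stableP => _ _ /imsetP [t _ ->] /imsetP [s _ ->].
  by rewrite /path_rel !posE; have := ltn_ord t; have := ltn_ord s; lia.
move=> i j; rewrite /path_rel => ij.
have lt_t : minn i j %/ 4 < k by have := ltn_ord i; have := ltn_ord j; lia.
have ij_pos : path_rel i (pos (Ordinal lt_t)) || path_rel j (pos (Ordinal lt_t)).
  by rewrite /path_rel posE /=; have := ltn_ord i; have := ltn_ord j; lia.
by case/orP: ij_pos => adj; apply/orP; [left | right];
  apply/nbhdP; exists (pos (Ordinal lt_t)) => //; apply: imset_f.
Qed.

Lemma vnumber_path (K : fieldType) m : 0 < m ->
  is_vnumber (edge_ideal (K:=K) (@path_rel m)) ((m + 2) %/ 4).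
Proof.
move=> m_gt0; apply: is_vnumber_edge_ideal.
- exact: path_rel_irr.
- exact: path_rel_sym.
- exact: path_stable_nbhd_cover.
by move=> A [_]; exact: path_cover_card.
Qed.

Lemma cycle_rel_irr n : 1 < n -> irreflexive (@cycle_rel n).
Proof. by move=> n_gt1 i; apply/negbTE; rewrite /cycle_rel; lia. Qed.

Lemma cycle_rel_sym n (i j : 'I_n) : cycle_rel i j = cycle_rel j i.
Proof. by rewrite /cycle_rel; apply/idP/idP; lia. Qed.

Lemma cycle_cover_card n (A : {set 'I_n}) : 2 < n ->
  vertex_cover (@cycle_rel n) (nbhd (@cycle_rel n) A) -> (n + 3) %/ 4 <= #|A|.
Proof.
move=> n_gt2 hcov; suff : n <= #|A| * 4 by lia.
(* The windows of the path case, taken modulo n. *)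
apply: (card_covered_by_windows (f := fun a t => (a + t + n - 2) %% n)) => i lt_i.
have lt_next : (if i.+1 < n then i.+1 else 0) < n by case: ifP; lia.
have [a aA adj] : exists2 a, a \in A &
    cycle_rel (Ordinal lt_i) a || cycle_rel (Ordinal lt_next) a.
  have : cycle_rel (Ordinal lt_i) (Ordinal lt_next) by rewrite /cycle_rel /=; case: ifP; lia.
  by case/hcov/orP => /nbhdP [a aA adj]; exists a; rewrite // adj ?orbT.
exists a => //.
have mod_i x : [|| x == i, x == n + i | x == n + (n + i)] -> i = x %% n.
  by case/or3P => /eqP ->; rewrite ?modnDl modn_small.
move: adj; rewrite /cycle_rel /=; have := ltn_ord a.
case: ifP => i_next lt_a /orP [] /or4P [] adj.
all: first [ by exfalso; lia | by exists 0 => //; apply: mod_i; lia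
           | by exists 1 => //; apply: mod_i; lia | by exists 2 => //; apply: mod_i; lia
           | by exists 3 => //; apply: mod_i; lia ].
Qed.

Lemma cycle_stable_nbhd_cover n : 2 < n ->
  exists2 A, stable_nbhd_cover (@cycle_rel n) A & #|A| <= (n + 3) %/ 4.
Proof.
case: n => // n n_gt2; set k := (n + 4) %/ 4.
pose pos (t : 'I_k) : 'I_n.+1 := inord (minn (4 * t) (n - 1)).
have posE t : pos t = minn (4 * t) (n - 1) :> nat by rewrite inordK //; lia.
exists [set pos t | t : 'I_k]; last first.
  by apply: leq_trans (leq_imset_card _ _) _; rewrite card_ord; lia.
split.
  apply/stableP => _ _ /imsetP [t _ ->] /imsetP [s _ ->].
  by rewrite /cycle_rel !posE /=; have := ltn_ord t; have := ltn_ord s; lia.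
move=> i j; rewrite /cycle_rel /= => ij.
pose t := if (i == n :> nat) || (j == n :> nat) then 0 else (minn i j + 2) %/ 4.
have lt_t : t < k by rewrite /t; have := ltn_ord i; have := ltn_ord j; case: ifP; lia.
have ij_pos : cycle_rel i (pos (Ordinal lt_t)) || cycle_rel j (pos (Ordinal lt_t)).
  by rewrite /cycle_rel posE /= /t; have := ltn_ord i; have := ltn_ord j; case: ifP; lia.
by case/orP: ij_pos => adj; apply/orP; [left | right];
  apply/nbhdP; exists (pos (Ordinal lt_t)) => //; apply: imset_f.
Qed.

Lemma vnumber_cycle (K : fieldType) n : 2 < n ->
  is_vnumber (edge_ideal (K:=K) (@cycle_rel n)) ((n + 3) %/ 4).
Proof.
move=> n_gt2; apply: is_vnumber_edge_ideal.
- by apply: cycle_rel_irr; lia.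
- exact: cycle_rel_sym.
- exact: cycle_stable_nbhd_cover.
by move=> A [_]; exact: cycle_cover_card.
Qed.

Theorem proposition3p4 (K : fieldType) (n : nat) (hn : (5 <= n)%N) :
  exists k : nat,
    is_vnumber (@edge_ideal (n - 3)%N K (@path_rel (n - 3)%N)) k /\
    is_vnumber (@edge_ideal n K (@cycle_rel n)) k.+1.
Proof.
exists ((n - 3 + 2) %/ 4); split; first by apply: vnumber_path; lia.
have -> : ((n - 3 + 2) %/ 4).+1 = (n + 3) %/ 4 by lia.
by apply: vnumber_cycle; lia.
Qed.
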